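(* Let $F$, $H$, $X$, $\Omega$, $Q$ and the sequences generated by the IneIREG method be as described in the context, and suppose $H$ is $\mu$-strongly monotone for some $\mu>0$. Let $\varepsilon>0$, let $\mathcal D_0>0$ satisfy $\mathcal D_0\ge\overline\lambda C_HD_X/\underline\lambda$, and suppose $\eta_k\equiv\eta:=\varepsilon/(2\mathcal D_0)$ for all $k\ge0$; $\lambda_k\in[\underline\lambda,\overline\lambda]$ for all $k\ge0$ with $0<\underline\lambda\le\overline\lambda<1/L$, $L:=L_F+\eta L_H$; and $\alpha_0\in[0,1]$ and $\alpha_{k+1}\le(1-\beta_k)\alpha_k$ for all $k\ge0$, where $\beta_k:=\big(\frac{1}{1-\lambda_k^2L^2}+\frac{1}{2\lambda_k\eta\mu}\big)^{-1}$. Define $p_k:=\big(\prod_{i=0}^k(1-\beta_i)\big)^{-1}$ for $k\ge0$, and for $k\ge1$ $\Lambda_k:=\sum_{j=0}^{k-1}\lambda_j\eta p_j$ and $\overline y_k:=\Lambda_k^{-1}\sum_{j=0}^{k-1}\lambda_j\eta p_jy_j$. Let $k\ge1$. If $$k\ge\Big\lceil\Big(\frac{1}{1-\overline\lambda^2L^2}+\frac{\mathcal D_0}{\underline\lambda\mu\varepsilon}\Big)\log\Big(\frac{2(k+1)D_X^2}{\underline\lambda\varepsilon}\Big)\Big\rceil,$$ then $0\le\mathrm{Gap}(\overline y_k,F,X)\le\varepsilon$.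
   Context: Work in $\mathbb{R}^n$ with Euclidean inner product $\langle\cdot,\cdot\rangle$ and norm $\|\cdot\|$; $\log$ is the natural logarithm. The maps $F\colon \mathrm{Dom}\,F\to\mathbb{R}^n$ and $H\colon\mathrm{Dom}\,H\to\mathbb{R}^n$ are monotone and Lipschitz continuous with constants $L_F>0$ and $L_H>0$; $H$ is $\mu$-strongly monotone means $\langle H(x)-H(y),x-y\rangle\ge\mu\|x-y\|^2$ for all $x,y\in\mathrm{Dom}\,H$. $X$ is a nonempty compact convex set and $\Omega$ a nonempty closed convex set with $X\subset\Omega\subset\mathrm{Dom}\,F\cap\mathrm{Dom}\,H$; $P_X,P_\Omega$ denote orthogonal projections. $Q:=\{x\in X:\langle F(x),y-x\rangle\ge0\ \forall y\in X\}$ is assumed nonempty. $D_X:=\sup_{x,y\in X}\|x-y\|$, $C_H:=\sup_{x\in X}\|H(x)\|$. $\mathrm{Gap}(z,F,X):=\sup_{x\in X}\langle F(x),z-x\rangle$. IneIREG method: start with $x_0=x_{-1}\in X$; for $k=0,1,\dots$, with parameters $\alpha_k\ge0$, $\lambda_k>0$, $\eta_k>0$, set $w_k=x_k+\alpha_k(x_k-x_{k-1})$, $w'_k=P_\Omega(w_k)$, $y_k=P_X\big(w_k-\lambda_k(F(w'_k)+\eta_kH(w'_k))\big)$, $x_{k+1}=P_X\big(w_k-\lambda_k(F(y_k)+\eta_kH(y_k))\big)$. *)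

From mathcomp Require Import all_boot all_order all_algebra.
From mathcomp Require Import all_classical all_reals all_analysis.
Set Implicit Arguments. Unset Strict Implicit. Unset Printing Implicit Defensive.
Import Order.TTheory GRing.Theory Num.Theory.
Import numFieldNormedType.Exports.
Local Open Scope classical_set_scope.
Local Open Scope ring_scope.

Section Defs.
Variables (R : realType) (n : nat).
Local Notation V := 'rV[R]_n.

Definition dotv (u v : V) : R := \sum_(i < n) u ord0 i * v ord0 i.
Definition enorm (u : V) : R := Num.sqrt (dotv u u).

Definition convex (C : set V) : Prop :=
  forall x y (t : R), C x -> C y -> 0 <= t <= 1 -> C (t *: x + (1 - t) *: y).

Definition is_proj (C : set V) (z p : V) : Prop :=
  C p /\ forall y, C y -> enorm (z - p) <= enorm (z - y).
(* the orthogonal projection P_C (well defined for nonempty closed convex C) *)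
Definition orthproj (C : set V) (z : V) : V := xget z (is_proj C z).

Definition monotone_op (D : set V) (F : V -> V) : Prop :=
  forall x y, D x -> D y -> 0 <= dotv (F x - F y) (x - y).
Definition strongly_monotone_op (D : set V) (F : V -> V) (mu : R) : Prop :=
  forall x y, D x -> D y -> mu * enorm (x - y) ^+ 2 <= dotv (F x - F y) (x - y).
Definition lipschitz_op (D : set V) (F : V -> V) (L : R) : Prop :=
  forall x y, D x -> D y -> enorm (F x - F y) <= L * enorm (x - y).

Definition Gap (z : V) (F : V -> V) (X : set V) : R :=
  sup [set dotv (F x) (z - x) | x in X].
Definition diamset (X : set V) : R := sup [set enorm (x - y) | x in X & y in X].
Definition supnorm (X : set V) (H : V -> V) : R := sup [set enorm (H x) | x in X].

Definition solset (F : V -> V) (X : set V) : set V :=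
  [set x | X x /\ forall y, X y -> 0 <= dotv (F x) (y - x)].

(* IneIREG iterates; x (-1) is represented by x 0 via k.-1 *)
Definition ine_w (x : nat -> V) (alpha : nat -> R) (k : nat) : V :=
  x k + alpha k *: (x k - x k.-1).

Definition beta_k (lam : nat -> R) (L eta mu : R) (k : nat) : R :=
  (1 / (1 - lam k ^+ 2 * L ^+ 2) + 1 / (2 * lam k * eta * mu))^-1.
Definition p_k (lam : nat -> R) (L eta mu : R) (k : nat) : R :=
  (\prod_(i < k.+1) (1 - beta_k lam L eta mu i))^-1.
Definition Lambda_k (lam : nat -> R) (L eta mu : R) (k : nat) : R :=
  \sum_(j < k) lam j * eta * p_k lam L eta mu j.
Definition ybar_k (lam : nat -> R) (L eta mu : R) (y : nat -> V) (k : nat) : V :=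
  (Lambda_k lam L eta mu k)^-1 *:
    \sum_(j < k) ((lam j * eta * p_k lam L eta mu j) *: y j).
End Defs.

(* Each IneIREG iteration is an extragradient step for the regularized operator
   F + eta H.  The two projection inequalities, monotonicity of F, strong
   monotonicity of H and the Lipschitz bound on F + eta H give, for z in X,
     2 lam_j <F z, y_j - z> <= (1 - beta_j) |w_j - z|^2 - |x_(j+1) - z|^2
                               + 2 lam_j eta C_H D_X,
   where beta_j = (1/a + 1/b)^-1 with a = 1 - lam_j^2 L^2 (the extragradient
   contraction) and b = 2 lam_j eta mu (strong monotonicity), combined by
   a b/(a + b) |u + v|^2 <= a |u|^2 + b |v|^2.
   Expanding |w_j - z|^2 at the inertial point and multiplying by p_j, the
   condition alpha_(j+1) <= (1 - beta_j) alpha_j makes the right-hand sides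
   telescope to at most (2k + 1) D_X^2.  As beta_j >= 1/K, with K the factor
   in front of the logarithm, p_k grows like exp(k/K), so for the stated k
   the total weight Lambda_k dominates that constant, and averaging bounds <F z, ybar_k - z> by eps uniformly in z;
   a solution of the variational inequality gives the lower bound 0. *)

From mathcomp Require Import all_boot all_order all_algebra.
From mathcomp Require Import all_classical all_reals all_analysis.
From mathcomp Require Import ring lra.
Import Order.TTheory GRing.Theory Num.Theory.
Import numFieldNormedType.Exports.
Local Open Scope classical_set_scope.
Local Open Scope ring_scope.
Set Implicit Arguments. Unset Strict Implicit. Unset Printing Implicit Defensive.

Section InnerProduct.
Variables (R : realType) (n : nat).
Local Notation V := 'rV[R]_n.
Implicit Types u v w : V.

Lemma dotvC u v : dotv u v = dotv v u.
Proof. by apply: eq_bigr => i _; rewrite mulrC. Qed.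

Lemma dotvDl u v w : dotv (u + v) w = dotv u w + dotv v w.
Proof. by rewrite /dotv -big_split; apply: eq_bigr => i _; rewrite mxE mulrDl. Qed.

Lemma dotvZl (a : R) u w : dotv (a *: u) w = a * dotv u w.
Proof. by rewrite /dotv mulr_sumr; apply: eq_bigr => i _; rewrite mxE mulrA. Qed.

Lemma dotvNl u w : dotv (- u) w = - dotv u w.
Proof. by rewrite -scaleN1r dotvZl mulN1r. Qed.

Lemma dotvBl u v w : dotv (u - v) w = dotv u w - dotv v w.
Proof. by rewrite dotvDl dotvNl. Qed.

Lemma dotvDr u v w : dotv w (u + v) = dotv w u + dotv w v.
Proof. by rewrite dotvC dotvDl !(dotvC w). Qed.

Lemma dotvZr (a : R) u w : dotv w (a *: u) = a * dotv w u.
Proof. by rewrite dotvC dotvZl dotvC. Qed.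

Lemma dotvNr u w : dotv w (- u) = - dotv w u.
Proof. by rewrite dotvC dotvNl dotvC. Qed.

Lemma dotvBr u v w : dotv w (u - v) = dotv w u - dotv w v.
Proof. by rewrite dotvDr dotvNr. Qed.

Lemma dotv0r u : dotv u 0 = 0.
Proof. by rewrite /dotv big1 // => i _; rewrite mxE mulr0. Qed.

Lemma dotv_sumr (I : Type) (r : seq I) (P : pred I) (f : I -> V) u :
  dotv u (\sum_(i <- r | P i) f i) = \sum_(i <- r | P i) dotv u (f i).
Proof.
elim: r => [|a r IH]; last by rewrite !big_cons; case: (P a); rewrite ?dotvDr IH.
by rewrite !big_nil dotv0r.
Qed.

Lemma dotvv_ge0 u : 0 <= dotv u u.
Proof. by apply: sumr_ge0 => i _; rewrite -expr2 sqr_ge0. Qed.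

Lemma dotvv_eq0 u : dotv u u = 0 -> u = 0.
Proof.
move=> /eqP; rewrite psumr_eq0 => [/allP uu0|i _]; last by rewrite -expr2 sqr_ge0.
apply/rowP => i; rewrite mxE.
by apply/eqP; rewrite -sqrf_eq0 expr2; exact: uu0 (mem_index_enum _).
Qed.

Lemma enorm_ge0 u : 0 <= enorm u.
Proof. exact: sqrtr_ge0. Qed.

Lemma sqr_enorm u : enorm u ^+ 2 = dotv u u.
Proof. by rewrite sqr_sqrtr // dotvv_ge0. Qed.

Lemma ler_enorm u v : (enorm u <= enorm v) = (dotv u u <= dotv v v).
Proof. exact/ler_sqrt/dotvv_ge0. Qed.

Lemma young_dotv u v (t : R) : 0 < t -> 2 * dotv u v <= t * dotv u u + t^-1 * dotv v v.
Proof.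
move=> t0; have := dotvv_ge0 (t *: u - v).
rewrite !(dotvBl, dotvBr, dotvZl, dotvZr) (dotvC v u) => h.
have -> : t * dotv u u + t^-1 * dotv v v =
   t^-1 * (t * (t * dotv u u) - t * dotv u v - (t * dotv u v - dotv v v)) + 2 * dotv u v.
  by field; rewrite gt_eqF.
by rewrite lerDr; apply: mulr_ge0; [rewrite invr_ge0 ltW | lra].
Qed.

Lemma cauchy_schwarz u v : dotv u v <= enorm u * enorm v.
Proof.
have [u0|nu] := eqVneq (dotv u u) 0.
  by rewrite (dotvv_eq0 u0) dotvC dotv0r mulr_ge0 ?enorm_ge0.
have [v0|nv] := eqVneq (dotv v v) 0.
  by rewrite (dotvv_eq0 v0) dotv0r mulr_ge0 ?enorm_ge0.
have eu : 0 < enorm u by rewrite sqrtr_gt0 lt_neqAle eq_sym nu dotvv_ge0.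
have ev : 0 < enorm v by rewrite sqrtr_gt0 lt_neqAle eq_sym nv dotvv_ge0.
have := young_dotv u v (divr_gt0 ev eu); rewrite -!sqr_enorm invf_div.
have -> : enorm v / enorm u * enorm u ^+ 2 + enorm u / enorm v * enorm v ^+ 2
   = 2 * (enorm u * enorm v) by field; rewrite !gt_eqF.
by rewrite ler_pM2l.
Qed.

Lemma enormD u v : enorm (u + v) <= enorm u + enorm v.
Proof.
rewrite -(ler_pXn2r (_ : 0 < 2)%N) ?nnegrE ?addr_ge0 ?enorm_ge0 //.
rewrite sqr_enorm !(dotvDl, dotvDr) (dotvC v u) sqrrD -!sqr_enorm.
have := cauchy_schwarz u v; lra.
Qed.

Lemma enormZ (a : R) u : enorm (a *: u) = `|a| * enorm u.
Proof.
by rewrite /enorm dotvZl dotvZr mulrA -expr2 sqrtrM ?sqr_ge0 // sqrtr_sqr.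
Qed.

Lemma dotv_polar (a b c : V) :
  2 * dotv (a - b) (c - b) = dotv (a - b) (a - b) + dotv (c - b) (c - b) - dotv (a - c) (a - c).
Proof. by rewrite !(dotvBl, dotvBr) (dotvC b a) (dotvC c a) (dotvC c b); ring. Qed.

Lemma dotv_extrapolate (a b c : V) (t : R) :
  dotv (a + t *: (a - b) - c) (a + t *: (a - b) - c) =
  (1 + t) * dotv (a - c) (a - c) - t * dotv (b - c) (b - c)
  + t * (1 + t) * dotv (a - b) (a - b).
Proof.
have -> : a + t *: (a - b) - c = (a - c) + t *: (a - b).
  by apply/rowP => i; rewrite !mxE; ring.
have -> : b - c = (a - c) - (a - b) by apply/rowP => i; rewrite !mxE; ring.
move: (a - c) (a - b) => u v.
by rewrite !(dotvBl, dotvBr, dotvDl, dotvDr, dotvZl, dotvZr) (dotvC v u); ring.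
Qed.

Lemma dotv_weighted_avg (k : nat) (c : nat -> R) (y : nat -> V) u z :
  \sum_(j < k) c j != 0 ->
  dotv u ((\sum_(j < k) c j)^-1 *: \sum_(j < k) c j *: y j - z) =
  (\sum_(j < k) c j)^-1 * \sum_(j < k) c j * dotv u (y j - z).
Proof.
move=> c0; rewrite dotvBr dotvZr dotv_sumr.
under [X in _ = _ * X]eq_bigr do rewrite dotvBr mulrBr.
rewrite sumrB -mulr_suml mulrBr mulrA mulVf // mul1r.
by congr (_ * _ - _); apply: eq_bigr => j _; rewrite dotvZr.
Qed.

End InnerProduct.

Section Projection.
Variables (R : realType) (n : nat).
Local Notation V := 'rV[R]_n.
Implicit Types (C : set V) (u z p q : V).

Lemma is_proj_variational C z p : convex C -> is_proj C z p ->
  forall q, C q -> dotv (z - p) (q - p) <= 0.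
Proof.
move=> cvxC [Cp pmin] q Cq.
set c := dotv (z - p) (q - p); set m := dotv (q - p) (q - p).
have m0 : 0 <= m by apply: dotvv_ge0.
have small_t : forall t, 0 < t <= 1 -> 2 * c <= t * m.
  move=> t /andP[t0 t1].
  have Cqt := cvxC q p t Cq Cp (introT andP (conj (ltW t0) t1)).
  have := pmin _ Cqt; rewrite ler_enorm.
  have -> : z - (t *: q + (1 - t) *: p) = (z - p) - t *: (q - p).
    by apply/rowP => i; rewrite !mxE; ring.
  have -> : dotv (z - p - t *: (q - p)) (z - p - t *: (q - p))
      = dotv (z - p) (z - p) - 2 * t * c + t ^+ 2 * m.
    rewrite /c /m; move: (z - p) (q - p) => a b.
    by rewrite !(dotvBl, dotvBr, dotvZl, dotvZr) (dotvC b a); ring.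
  move=> h.
  have h2 : t * (2 * c) <= t * (t * m) by nra.
  by rewrite ler_pM2l in h2.
rewrite leNgt; apply/negP => c0.
have cm : 0 < c + m by lra.
have := small_t (c / (c + m)); rewrite divr_gt0 //= ler_pdivrMr // mul1r lerDl m0.
by move=> /(_ isT); rewrite mulrAC ler_pdivlMr //; nra.
Qed.

Lemma is_proj_dist_le C z p q : convex C -> is_proj C z p -> C q ->
  dotv (p - q) (p - q) <= dotv (z - q) (z - q).
Proof.
move=> cvxC zp Cq; have := is_proj_variational cvxC zp Cq.
have -> : z - q = (z - p) + (p - q) by apply/rowP => i; rewrite !mxE; ring.
have -> : q - p = - (p - q) by rewrite opprB.
move: (z - p) (p - q) => a b; rewrite dotvNr !(dotvDl, dotvDr) (dotvC b a).
have := dotvv_ge0 a; lra.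
Qed.

Lemma normr_le_enorm u : `|u| <= enorm u.
Proof.
rewrite [`|_|]/Num.Def.normr /= mx_normrE; apply: bigmax_le => [|[i j] _ /=].
  exact: enorm_ge0.
rewrite -[`|_|]sqrtr_sqr /enorm ler_sqrt ?dotvv_ge0 // (ord1 i) /dotv.
rewrite (bigD1 j) //= -expr2 lerDl.
by apply: sumr_ge0 => l _; rewrite -expr2 sqr_ge0.
Qed.

Lemma dotvv_le_normr u : dotv u u <= n%:R * `|u| ^+ 2.
Proof.
rewrite /dotv mulr_natl -[n in _ *+ n]card_ord -sumr_const.
apply: ler_sum => i _; rewrite -expr2 -real_normK ?num_real //.
rewrite lerXn2r ?nnegrE // [`|u|]/Num.Def.normr /= mx_normrE.
by apply/bigmax_geP; right; exists (ord0, i).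
Qed.

Lemma continuous_dist2 z : continuous (fun u : V => dotv (z - u) (z - u)).
Proof.
apply: (@continuous_big _ _ (fun a b : R => a + b) 0 xpredT); first exact: add_continuous.
move=> i _.
have ci : continuous (fun u : V => (z - u) ord0 i).
  have -> : (fun u : V => (z - u) ord0 i) = (fun u : V => z ord0 i - u ord0 i).
    by apply/funext => u; rewrite !mxE.
  by move=> u; apply: continuousB; [exact: cst_continuous | exact: coord_continuous].
by move=> u; apply: continuousM; apply: ci.
Qed.

Lemma is_proj_exists C z : C !=set0 -> closed C -> exists p, is_proj C z p.
Proof.
move=> [c0 Cc0] clC.
pose f u := dotv (z - u) (z - u).
pose K := C `&` (f @^-1` [set r | r <= f c0]).
have clK : closed K.
  apply: closedI => //.
  by move/continuous_closedP : (@continuous_dist2 z); apply; apply: closed_le.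
have bK : bounded_set K.
  exists (`|z| + enorm (z - c0)); split; first by rewrite num_real.
  move=> M HM u [_ Ku] /=; apply/ltW/(le_lt_trans _ HM).
  have -> : u = z - (z - u) by rewrite opprB addrC subrK.
  apply: (le_trans (ler_normB _ _)); rewrite lerD2l.
  by apply: (le_trans (normr_le_enorm _)); rewrite ler_enorm.
have K0 : K !=set0 by exists c0; split => //=.
have [p Kp pmin] := compact_EVT_min K0 (bounded_closed_compact bK clK)
  (continuous_subspaceT (@continuous_dist2 z)).
move: Kp; rewrite inE => -[Cp fp].
exists p; split => // q Cq; rewrite ler_enorm.
have [fq|fq] := leP (f q) (f c0); first by apply: (pmin q); rewrite inE.
exact/ltW/(le_lt_trans fp).
Qed.

Lemma orthprojP C z : C !=set0 -> closed C -> is_proj C z (orthproj C z).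
Proof.
move=> C0 clC; rewrite /orthproj; case: xgetP => // none.
by have [p zp] := is_proj_exists z C0 clC; have := none p.
Qed.

Lemma compact_dist_bounded (X : set V) : compact X ->
  exists B, forall u v, X u -> X v -> enorm (u - v) <= B.
Proof.
move=> /compact_bounded [M [_ hM]].
have Xb v : X v -> `|v| <= M + 1 by move=> Xv; apply: (hM (M + 1)) => //; rewrite ltrDl.
exists (Num.sqrt (n%:R * (2 * (M + 1)) ^+ 2)) => u v Xu Xv.
rewrite /enorm ler_sqrt; last by rewrite mulr_ge0 // sqr_ge0.
apply: (le_trans (dotvv_le_normr _)); apply: ler_wpM2l => //.
have := ler_normB u v; have := Xb u Xu; have := Xb v Xv; have := normr_ge0 (u - v).
by move=> *; apply: lerXn2r; rewrite ?nnegrE //; lra.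
Qed.

Lemma enorm_le_diamset (X : set V) u v : compact X -> X u -> X v ->
  enorm (u - v) <= diamset X.
Proof.
move=> /compact_dist_bounded [B hB] Xu Xv; apply: ub_le_sup.
  by exists B => r [u' Xu' [v' Xv' <-]]; apply: hB.
by exists u => //; exists v.
Qed.

Lemma enorm_le_supnorm (X D : set V) (H : V -> V) (LH : R) u :
  compact X -> X `<=` D -> lipschitz_op D H LH -> X u -> enorm (H u) <= supnorm X H.
Proof.
move=> /compact_dist_bounded [B hB] XD lipH Xu; apply: ub_le_sup; last by exists u.
exists (enorm (H u) + `|LH| * B) => r [v Xv <-].
rewrite -[H v](subrK (H u)) addrC; apply: (le_trans (enormD _ _)); rewrite lerD2l.
apply: (le_trans (lipH _ _ (XD _ Xv) (XD _ Xu))).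
apply: (le_trans (ler_wpM2r (enorm_ge0 _) (ler_norm LH))).
exact: ler_wpM2l (hB _ _ Xv Xu).
Qed.

Lemma dotv_le_supnorm_diamset (X D : set V) (H : V -> V) (LH : R) u v :
  compact X -> X `<=` D -> lipschitz_op D H LH -> X u -> X v ->
  dotv (H u) (u - v) <= supnorm X H * diamset X.
Proof.
move=> cX XD lipH Xu Xv; apply: le_trans (cauchy_schwarz _ _) _.
apply: ler_pM; rewrite ?enorm_ge0 //; first exact: enorm_le_supnorm lipH Xu.
exact: enorm_le_diamset.
Qed.

Lemma dotvv_le_sqr_diamset (X : set V) u v : compact X -> X u -> X v ->
  dotv (u - v) (u - v) <= diamset X ^+ 2.
Proof.
move=> cX Xu Xv; rewrite -sqr_enorm; apply: lerXn2r; rewrite ?nnegrE ?enorm_ge0 //.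
  exact: le_trans (enorm_ge0 _) (enorm_le_diamset cX Xu Xu).
exact: enorm_le_diamset.
Qed.

End Projection.

Section ExtragradientStep.
Variables (R : realType) (n : nat).
Local Notation V := 'rV[R]_n.

Lemma parallel_sum_dotv_le (p q : V) (a b : R) : 0 < a -> 0 < b ->
  (1 / a + 1 / b)^-1 * dotv (p + q) (p + q) <= a * dotv p p + b * dotv q q.
Proof.
move=> a0 b0; have := dotvv_ge0 (a *: p - b *: q).
rewrite !(dotvBl, dotvBr, dotvZl, dotvZr, dotvDl, dotvDr) (dotvC q p) => h.
have -> : (1 / a + 1 / b)^-1 = a * b / (a + b) by field; rewrite ?gt_eqF // addr_gt0.
by rewrite mulrAC ler_pdivrMr ?addr_gt0 //; lra.
Qed.

(* One step [y = P(w - lam gw)], [xp = P(w - lam gy)] for [g = f + eta h],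
   measured against a point [x]; [gw] is evaluated at the point [wp]. *)
Lemma extragradient_step (w x y xp wp gy gw fx fy hx hy : V) (lam eta mu L C : R) :
  0 < lam -> 0 < eta -> 0 < mu -> 0 < 1 - lam ^+ 2 * L ^+ 2 ->
  dotv (w - lam *: gy - xp) (x - xp) <= 0 ->
  dotv (w - lam *: gw - y) (xp - y) <= 0 ->
  dotv (wp - y) (wp - y) <= dotv (w - y) (w - y) ->
  dotv (gw - gy) (gw - gy) <= L ^+ 2 * dotv (wp - y) (wp - y) ->
  gy = fy + eta *: hy ->
  0 <= dotv (fy - fx) (y - x) ->
  mu * dotv (y - x) (y - x) <= dotv (hy - hx) (y - x) ->
  dotv hx (x - y) <= C ->
  2 * lam * dotv fx (y - x) <=
    (1 - (1 / (1 - lam ^+ 2 * L ^+ 2) + 1 / (2 * lam * eta * mu))^-1) * dotv (w - x) (w - x)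
    - dotv (xp - x) (xp - x) + 2 * lam * eta * C.
Proof.
move=> l0 e0 m0 a0 vi_xp vi_y wp_y lip_g gyE mono_f smono_h hC.
have le0 : 0 < 2 * lam * eta by rewrite !mulr_gt0.
have split_wx := parallel_sum_dotv_le (w - y) (y - x) a0 (mulr_gt0 le0 m0).
rewrite (_ : w - y + (y - x) = w - x) in split_wx; last first.
  by apply/rowP => i; rewrite !mxE; ring.
rewrite (_ : w - lam *: gy - xp = (w - xp) - lam *: gy) in vi_xp; last first.
  by apply/rowP => i; rewrite !mxE; ring.
rewrite (_ : w - lam *: gw - y = (w - y) - lam *: gw) in vi_y; last first.
  by apply/rowP => i; rewrite !mxE; ring.
rewrite dotvBl dotvZl in vi_xp; rewrite dotvBl dotvZl in vi_y.
have P1 := dotv_polar w xp x; have P2 := dotv_polar w y xp.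
have regroup : dotv gy (x - xp) + dotv gw (xp - y) = dotv gy (x - y) + dotv (gw - gy) (xp - y).
  have -> : x - xp = (x - y) - (xp - y) by apply/rowP => i; rewrite !mxE; ring.
  by rewrite dotvBr dotvBl; ring.
(* Young's inequality absorbs the Lipschitz error term into [|xp - y|^2]. *)
have young := young_dotv (lam *: (gw - gy)) (xp - y) ltr01.
rewrite invr1 !mul1r !(dotvZl, dotvZr) in young.
have gyxy : dotv gy (x - y) = - dotv fy (y - x) - eta * dotv hy (y - x).
  by rewrite -[x - y]opprB gyE dotvNr dotvDl dotvZl; ring.
rewrite (dotvBl fy fx) in mono_f; rewrite (dotvBl hy hx) in smono_h.
have hC' : - C <= dotv hx (y - x) by rewrite -[y - x]opprB dotvNr lerN2.
have xpx : dotv (x - xp) (x - xp) = dotv (xp - x) (xp - x).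
  by rewrite -[x - xp]opprB dotvNr dotvNl opprK.
have lam2 : 0 <= lam ^+ 2 by rewrite sqr_ge0.
have m_lip : lam ^+ 2 * dotv (gw - gy) (gw - gy) <= lam ^+ 2 * L ^+ 2 * dotv (w - y) (w - y).
  rewrite -mulrA; apply: ler_wpM2l => //; apply: (le_trans lip_g).
  by apply: ler_wpM2l => //; rewrite sqr_ge0.
have m_f : 2 * lam * dotv fx (y - x) <= 2 * lam * dotv fy (y - x).
  by apply: ler_wpM2l; [rewrite mulr_ge0 // ltW | lra].
have m_h : 2 * lam * eta * (dotv hx (y - x) + mu * dotv (y - x) (y - x))
          <= 2 * lam * eta * dotv hy (y - x).
  by apply: ler_wpM2l; [exact: ltW | lra].
have m_C : 2 * lam * eta * (- C) <= 2 * lam * eta * dotv hx (y - x).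
  by apply: ler_wpM2l => //; exact: ltW.
have m_g : 2 * lam * (dotv gy (x - xp) + dotv gw (xp - y)) =
    2 * lam * (- dotv fy (y - x) - eta * dotv hy (y - x))
    + 2 * (lam * dotv (gw - gy) (xp - y)).
  by rewrite regroup gyxy; ring.
lra.
Qed.

End ExtragradientStep.

Section InertialTelescope.
Variable R : realType.
Implicit Types bet alp : nat -> R.

Definition invprod bet j : R := (\prod_(i < j) (1 - bet i))^-1.

Lemma invprod0 bet : invprod bet 0 = 1.
Proof. by rewrite /invprod big_ord0 invr1. Qed.

Lemma invprod_gt0 bet j : (forall i, 0 < 1 - bet i) -> 0 < invprod bet j.
Proof. by move=> hb; rewrite invr_gt0 prodr_gt0. Qed.

Lemma invprodS bet j : (forall i, 0 < 1 - bet i) ->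
  invprod bet j.+1 * (1 - bet j) = invprod bet j.
Proof.
by move=> hb; rewrite /invprod big_ord_recr /= invfM -mulrA mulVf ?mulr1 ?gt_eqF.
Qed.

Variables (bet alp : nat -> R).
Hypotheses (bet_lt1 : forall j, 0 < 1 - bet j) (bet_ge0 : forall j, 1 - bet j <= 1).
Hypotheses (alp_ge0 : forall j, 0 <= alp j) (alp0_le1 : alp 0%N <= 1).
Hypothesis alpS : forall j, alp j.+1 <= (1 - bet j) * alp j.

Lemma inertia_le1 j : alp j <= 1.
Proof.
elim: j => // j IH; apply: (le_trans (alpS j)).
by have := bet_lt1 j; have := bet_ge0 j; have := alp_ge0 j; nra.
Qed.

Lemma invprod_inertia_decr j : invprod bet j.+1 * alp j.+1 <= invprod bet j * alp j.
Proof.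
rewrite -(invprodS j bet_lt1) -mulrA.
by apply: ler_wpM2l; [exact/ltW/invprod_gt0 | exact: alpS].
Qed.

Lemma invprod_inertia_le1 j : invprod bet j * alp j <= 1.
Proof.
elim: j => [|j IH]; first by rewrite invprod0 mul1r.
exact: le_trans (invprod_inertia_decr j) IH.
Qed.

(* [a j] plays [|x_j - z|^2] (with [x_(-1) = x_0]) and [d j] plays
   [|x_j - x_(j-1)|^2]; the weights [invprod bet] make the recursion telescope. *)
Variables (lam a d g : nat -> R) (D2 : R).
Hypotheses (a_bnd : forall j, 0 <= a j <= D2) (d_bnd : forall j, 0 <= d j <= D2).
Hypothesis step : forall j, 2 * lam j * g j <=
  (1 - bet j) * ((1 + alp j) * a j - alp j * a j.-1 + alp j * (1 + alp j) * d j) - a j.+1.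

Lemma inertial_telescope_invariant m :
  \sum_(j < m) 2 * lam j * invprod bet j.+1 * g j
    + invprod bet m * a m - invprod bet m * alp m * a m.-1
  <= (1 - invprod bet m * alp m + 2 * m%:R) * D2.
Proof.
have q_gt0 j := ltW (invprod_gt0 j bet_lt1).
elim: m => [|j IH].
  rewrite big_ord0 invprod0 !mul1r /=; have := a_bnd 0%N; have := alp_ge0 0%N.
  by have := alp0_le1; nra.
rewrite big_ord_recr /=.
have stepq : invprod bet j.+1 * (2 * lam j * g j) <=
    invprod bet j * ((1 + alp j) * a j - alp j * a j.-1 + alp j * (1 + alp j) * d j)
    - invprod bet j.+1 * a j.+1.
  apply: (le_trans (ler_wpM2l (q_gt0 j.+1) (step j))).
  by rewrite mulrBr mulrA (invprodS j bet_lt1).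
have drop_a : (invprod bet j * alp j - invprod bet j.+1 * alp j.+1) * a j <=
    (invprod bet j * alp j - invprod bet j.+1 * alp j.+1) * D2.
  apply: ler_wpM2l; first by rewrite subr_ge0 invprod_inertia_decr.
  by case/andP: (a_bnd j).
have drop_d : invprod bet j * alp j * (1 + alp j) * d j <= 2 * D2.
  have c2 : 0 <= invprod bet j * alp j * (1 + alp j) <= 2.
    have := invprod_inertia_le1 j; have := mulr_ge0 (q_gt0 j) (alp_ge0 j).
    have := inertia_le1 j; have := alp_ge0 j; nra.
  case/andP: c2 => c0 c2; case/andP: (d_bnd j) => d0 d1.
  exact: le_trans (ler_wpM2l c0 d1) (ler_wpM2r (le_trans d0 d1) c2).
rewrite -addn1 natrD; lra.
Qed.

Lemma inertial_telescope m :
  \sum_(j < m) 2 * lam j * invprod bet j.+1 * g j <= (2 * m%:R + 1) * D2.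
Proof.
have := inertial_telescope_invariant m.
have c0 := mulr_ge0 (ltW (invprod_gt0 m bet_lt1)) (alp_ge0 m).
have c1 := invprod_inertia_le1 m.
have qa := mulr_ge0 (ltW (invprod_gt0 m bet_lt1)) (proj1 (andP (a_bnd m))).
have /andP[_ am1] := a_bnd m.-1.
have ca : invprod bet m * alp m * a m.-1 <= invprod bet m * alp m * D2 by exact: ler_wpM2l.
lra.
Qed.

End InertialTelescope.

Lemma invprod_ge (R : realType) (bet : nat -> R) (K A : R) (k : nat) :
  0 < K -> 0 < A -> (forall i, 0 < 1 - bet i) -> (forall i, K^-1 <= bet i) ->
  Num.ceil (K * ln A) <= k%:Z -> A <= invprod bet k.
Proof.
move=> K0 A0 hb hK hc.
have rate0 : 0 <= 1 - K^-1 by have := hb 0%N; have := hK 0%N; lra.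
have prod_le : \prod_(i < k) (1 - bet i) <= (1 - K^-1) ^+ k.
  rewrite -[k in _ ^+ k]card_ord -prodr_const; apply: ler_prod => i _.
  by rewrite ltW //= lerD2l lerN2.
have pow_le : (1 - K^-1) ^+ k <= expR (- (k%:R / K)).
  rewrite -mulrN expRM_natl; apply: lerXn2r; rewrite ?nnegrE ?expR_ge0 //.
  exact: expR_ge1Dx.
have lnA : ln A <= k%:R / K.
  rewrite ler_pdivlMr // mulrC; apply: (le_trans (ceil_ge _)).
  by rewrite -(ler_int R) in hc.
apply: (@le_trans _ _ (expR (k%:R / K))); first by rewrite -{1}(lnK A0) ler_expR.
rewrite -[expR (_ / _)]invrK -expRN lef_pV2 ?posrE ?expR_gt0 ?invr_gt0 ?prodr_gt0 //.
exact: le_trans prod_le pow_le.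
Qed.

Lemma sum_ord_ge_last (R : numDomainType) (f : nat -> R) k :
  (0 < k)%N -> (forall j, 0 <= f j) -> f k.-1 <= \sum_(j < k) f j.
Proof. by case: k => // k _ f0; rewrite big_ord_recr /= lerDr sumr_ge0. Qed.

Section Weights.
Variable R : realType.
Implicit Types (lam : nat -> R) (L eta mu : R).

Lemma stepsize_contraction (a b L : R) : 0 < L -> 0 <= a <= b -> b < 1 / L ->
  0 < 1 - a ^+ 2 * L ^+ 2.
Proof.
move=> L0 /andP[a0 ab]; rewrite ltr_pdivlMr // => bL.
have aL : a * L < 1 := le_lt_trans (ler_wpM2r (ltW L0) ab) bL.
by have := mulr_ge0 a0 (ltW L0); rewrite -exprMn subr_gt0 expr2; nra.
Qed.

Lemma regularization_bias_le (lamlo lamhi c D0 eps : R) :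
  0 < lamlo <= lamhi -> 0 <= c -> 0 < D0 -> 0 < eps ->
  lamhi * c / lamlo <= D0 -> eps / (2 * D0) * c <= eps / 2.
Proof.
move=> /andP[lo0 lohi] c0 D00 eps0; rewrite ler_pdivrMr // => hD0.
have c_le : c <= D0.
  by rewrite -(ler_pM2l lo0); have := ler_wpM2r c0 lohi; lra.
have -> : eps / 2 = eps / (2 * D0) * D0 by field; rewrite gt_eqF.
by apply: ler_wpM2l c_le; rewrite divr_ge0 ?mulr_ge0 ?ltW.
Qed.

Lemma beta_k_bounds lam L eta mu j : 0 < lam j -> 0 < eta -> 0 < mu ->
  0 < 1 - lam j ^+ 2 * L ^+ 2 -> 0 < 1 - beta_k lam L eta mu j <= 1.
Proof.
move=> lam0 eta0 mu0 a0; rewrite /beta_k.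
have a1 : 1 - lam j ^+ 2 * L ^+ 2 <= 1 by rewrite lerBlDr lerDl mulr_ge0 ?sqr_ge0.
have ia1 : 1 <= 1 / (1 - lam j ^+ 2 * L ^+ 2) by rewrite div1r invf_ge1.
have ib0 : 0 < 1 / (2 * lam j * eta * mu) by rewrite div1r invr_gt0 !mulr_gt0.
have s1 : 1 < 1 / (1 - lam j ^+ 2 * L ^+ 2) + 1 / (2 * lam j * eta * mu) by lra.
have := s1; rewrite -invf_lt1 ?(lt_trans ltr01 s1) // => b1.
have b0 : 0 < (1 / (1 - lam j ^+ 2 * L ^+ 2) + 1 / (2 * lam j * eta * mu))^-1.
  by rewrite invr_gt0 (lt_trans ltr01 s1).
apply/andP; split; lra.
Qed.

Lemma beta_k_ge lam L eta mu (lamlo lamhi : R) j :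
  0 < lamlo -> lamlo <= lam j <= lamhi -> 0 < eta -> 0 < mu ->
  0 < 1 - lamhi ^+ 2 * L ^+ 2 ->
  (1 / (1 - lamhi ^+ 2 * L ^+ 2) + 1 / (2 * lamlo * eta * mu))^-1 <= beta_k lam L eta mu j.
Proof.
move=> lo0 /andP[lo hi] eta0 mu0 ahi0.
have lam0 : 0 < lam j by exact: lt_le_trans lo.
have a_le : 1 - lamhi ^+ 2 * L ^+ 2 <= 1 - lam j ^+ 2 * L ^+ 2.
  rewrite lerD2l lerN2; apply: ler_wpM2r; first exact: sqr_ge0.
  have lamhi0 : 0 < lamhi := lt_le_trans lam0 hi.
  by rewrite ler_sqr ?nnegrE ?(ltW lam0) ?(ltW lamhi0).
have b_le : 2 * lamlo * eta * mu <= 2 * lam j * eta * mu.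
  by rewrite !ler_pM2r // ler_pM2l.
have a0 := lt_le_trans ahi0 a_le.
have blo0 : 0 < 2 * lamlo * eta * mu by rewrite !mulr_gt0.
have b0 : 0 < 2 * lam j * eta * mu by rewrite !mulr_gt0.
rewrite /beta_k lef_pV2 ?posrE ?addr_gt0 ?divr_gt0 //.
by rewrite lerD // !div1r lef_pV2 ?posrE.
Qed.

Lemma weighted_invprod_sum_ge (bet lam : nat -> R) (K lamlo eps D : R) k :
  (0 < k)%N -> 0 < K -> 0 < lamlo -> 0 < eps ->
  (forall j, lamlo <= lam j) -> (forall i, 0 < 1 - bet i) -> (forall i, K^-1 <= bet i) ->
  Num.ceil (K * ln (2 * k.+1%:R * D ^+ 2 / (lamlo * eps))) <= k%:Z ->
  (2 * k%:R + 1) * D ^+ 2 <= eps * \sum_(j < k) lam j * invprod bet j.+1.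
Proof.
move=> k0 K0 lo0 eps0 lo hb hK hceil.
have q0 j := invprod_gt0 j hb.
have last_le : lamlo * invprod bet k <= \sum_(j < k) lam j * invprod bet j.+1.
  have w0 j : 0 <= lam j * invprod bet j.+1.
    by rewrite mulr_ge0 ?ltW ?(lt_le_trans lo0 (lo j)).
  have := @sum_ord_ge_last _ (fun j => lam j * invprod bet j.+1) k k0 w0.
  by rewrite prednK //=; apply: le_trans; apply: ler_wpM2r; [exact/ltW/q0 | exact: lo].
have [->|D0] := eqVneq D 0.
  have S0 := le_trans (mulr_ge0 (ltW lo0) (ltW (q0 k))) last_le.
  by rewrite expr0n mulr0; exact: mulr_ge0 (ltW eps0) S0.
pose A := 2 * k.+1%:R * D ^+ 2 / (lamlo * eps).
have D2 : 0 < D ^+ 2 by rewrite lt_neqAle eq_sym sqrf_eq0 D0 sqr_ge0.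
have A0 : 0 < A by rewrite /A divr_gt0 ?(mulr_gt0 _ D2) ?mulr_gt0 ?ltr0n.
have eA : eps * (lamlo * A) = 2 * k.+1%:R * D ^+ 2 by rewrite /A; field; rewrite !gt_eqF.
apply: le_trans (ler_wpM2l (ltW eps0) (le_trans _ last_le)); last first.
  by apply: ler_wpM2l; [exact: ltW | exact: (invprod_ge K0 A0 hb hK hceil)].
by rewrite eA ler_wpM2r ?sqr_ge0 // -addn1 natrD; lra.
Qed.

Lemma p_k_gt0 lam L eta mu j : (forall i, 0 < lam i) -> 0 < eta -> 0 < mu ->
  (forall i, 0 < 1 - lam i ^+ 2 * L ^+ 2) -> 0 < p_k lam L eta mu j.
Proof.
move=> lam0 eta0 mu0 lamL; apply: invprod_gt0 => i.
by case/andP: (beta_k_bounds (lam0 i) eta0 mu0 (lamL i)).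
Qed.

Lemma p_k_weighted_sum_ge lam L eta mu (lamlo lamhi eps D : R) k :
  (0 < k)%N -> 0 < lamlo -> (forall j, lamlo <= lam j <= lamhi) -> 0 < eta -> 0 < mu ->
  0 < eps -> 0 < 1 - lamhi ^+ 2 * L ^+ 2 -> (forall j, 0 < 1 - lam j ^+ 2 * L ^+ 2) ->
  Num.ceil ((1 / (1 - lamhi ^+ 2 * L ^+ 2) + 1 / (2 * lamlo * eta * mu)) *
    ln (2 * k.+1%:R * D ^+ 2 / (lamlo * eps))) <= k%:Z ->
  (2 * k%:R + 1) * D ^+ 2 <= eps * \sum_(j < k) lam j * p_k lam L eta mu j.
Proof.
move=> k0 lo0 hlam eta0 mu0 eps0 hi0 lamL hceil.
have lam0 j : 0 < lam j by case/andP: (hlam j) => lo _; exact: lt_le_trans lo.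
apply: weighted_invprod_sum_ge hceil => // [|j|j|j].
- by rewrite addr_gt0 // divr_gt0 // !mulr_gt0.
- by case/andP: (hlam j).
- by case/andP: (beta_k_bounds (lam0 j) eta0 mu0 (lamL j)).
- exact: beta_k_ge lo0 (hlam j) eta0 mu0 hi0.
Qed.

End Weights.

Lemma Gap_weighted_avg (R : realType) (n : nat) (F : 'rV[R]_n -> 'rV[R]_n) (X : set 'rV[R]_n)
    (c : nat -> R) (y : nat -> 'rV[R]_n) (k : nat) (e : R) :
  (0 < k)%N -> (forall j, 0 < c j) -> (forall j, X (y j)) -> solset F X !=set0 ->
  (forall z, X z -> \sum_(j < k) c j * dotv (F z) (y j - z) <= e * \sum_(j < k) c j) ->
  let ybar := (\sum_(j < k) c j)^-1 *: \sum_(j < k) c j *: y j in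
  0 <= Gap ybar F X /\ Gap ybar F X <= e.
Proof.
move=> k0 c0 yX [xs [Xxs xs_sol]] hz ybar.
have S0 : 0 < \sum_(j < k) c j.
  exact: lt_le_trans (c0 k.-1) (sum_ord_ge_last k0 (fun j => ltW (c0 j))).
have ybar_le z : X z -> dotv (F z) (ybar - z) <= e.
  move=> Xz; rewrite dotv_weighted_avg ?gt_eqF // mulrC ler_pdivrMr //.
  exact: hz.
have ybar_ge : 0 <= dotv (F xs) (ybar - xs).
  rewrite dotv_weighted_avg ?gt_eqF //; apply: mulr_ge0; first by rewrite invr_ge0 ltW.
  by apply: sumr_ge0 => j _; rewrite mulr_ge0 ?xs_sol ?ltW.
have bnd : has_ubound [set dotv (F z) (ybar - z) | z in X].
  by exists e => r [z Xz <-]; exact: ybar_le.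
split; first by apply: le_trans ybar_ge (ub_le_sup bnd _); exists xs.
by apply: ge_sup => [|r [z Xz <-]]; [exists (dotv (F xs) (ybar - xs)); exists xs | exact: ybar_le].
Qed.

Section IneIREG.
Variables (R : realType) (n : nat).
Local Notation V := 'rV[R]_n.
Variables (F H : V -> V) (DomF DomH X Omega : set V) (LF LH mu eta L : R).
Variables (alpha lam : nat -> R) (x y : nat -> V).
Hypotheses (monoF : monotone_op DomF F) (lipF : lipschitz_op DomF F LF).
Hypotheses (lipH : lipschitz_op DomH H LH) (smonoH : strongly_monotone_op DomH H mu).
Hypotheses (X0 : X !=set0) (clX : closed X) (cvxX : convex X).
Hypotheses (Omega0 : Omega !=set0) (clOmega : closed Omega) (cvxOmega : convex Omega).
Hypotheses (XOmega : X `<=` Omega) (OmegaDom : Omega `<=` DomF `&` DomH).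
Hypotheses (eta_gt0 : 0 < eta) (mu_gt0 : 0 < mu) (L_ge : LF + eta * LH <= L).
Hypotheses (lam_gt0 : forall j, 0 < lam j) (lamL : forall j, 0 < 1 - lam j ^+ 2 * L ^+ 2).
Hypotheses (alpha_ge0 : forall j, 0 <= alpha j) (alpha0_le1 : alpha 0%N <= 1).
Hypothesis alphaS : forall j, alpha j.+1 <= (1 - beta_k lam L eta mu j) * alpha j.
Hypothesis x0X : X (x 0%N).
Local Notation w j := (ine_w x alpha j).
Local Notation w' j := (orthproj Omega (w j)).
Hypothesis yE : forall j,
  y j = orthproj X (w j - lam j *: (F (w' j) + eta *: H (w' j))).
Hypothesis xE : forall j, x j.+1 = orthproj X (w j - lam j *: (F (y j) + eta *: H (y j))).

Let projX z : is_proj X z (orthproj X z). Proof. exact: orthprojP. Qed.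

Lemma ineireg_x_in j : X (x j).
Proof. by case: j => // j; rewrite xE; exact: proj1 (projX _). Qed.

Lemma ineireg_y_in j : X (y j).
Proof. by rewrite yE; exact: proj1 (projX _). Qed.

Lemma ineireg_lipschitz u v : Omega u -> Omega v ->
  dotv (F u + eta *: H u - (F v + eta *: H v)) (F u + eta *: H u - (F v + eta *: H v))
  <= L ^+ 2 * dotv (u - v) (u - v).
Proof.
move=> /OmegaDom [Fu Hu] /OmegaDom [Fv Hv].
have lip : enorm (F u + eta *: H u - (F v + eta *: H v)) <= L * enorm (u - v).
  rewrite (_ : F u + eta *: H u - (F v + eta *: H v) = F u - F v + eta *: (H u - H v)).
    apply: (le_trans (enormD _ _)); rewrite enormZ gtr0_norm //.
    have hH := ler_wpM2l (ltW eta_gt0) (lipH Hu Hv).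
    have hL := ler_wpM2r (enorm_ge0 (u - v)) L_ge.
    have := lipF Fu Fv; lra.
  by apply/rowP => i; rewrite !mxE; ring.
rewrite -!sqr_enorm -exprMn; apply: lerXn2r; rewrite ?nnegrE ?enorm_ge0 //.
exact: le_trans (enorm_ge0 _) lip.
Qed.

Lemma ineireg_step j z : X z ->
  2 * lam j * dotv (F z) (y j - z) <=
    (1 - beta_k lam L eta mu j) * dotv (w j - z) (w j - z)
    - dotv (x j.+1 - z) (x j.+1 - z) + 2 * lam j * eta * dotv (H z) (z - y j).
Proof.
move=> Xz; have Xy := ineireg_y_in j.
have [DFz DHz] := OmegaDom (XOmega Xz); have [DFy DHy] := OmegaDom (XOmega Xy).
have vi_x : dotv (w j - lam j *: (F (y j) + eta *: H (y j)) - x j.+1) (z - x j.+1) <= 0.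
  by rewrite xE; apply: (is_proj_variational cvxX (projX _)).
have vi_y : dotv (w j - lam j *: (F (w' j) + eta *: H (w' j)) - y j) (x j.+1 - y j) <= 0.
  by rewrite yE; apply: (is_proj_variational cvxX (projX _)); exact: ineireg_x_in.
have w'_y := is_proj_dist_le cvxOmega (orthprojP (w j) Omega0 clOmega) (XOmega Xy).
have lip := ineireg_lipschitz (proj1 (orthprojP (w j) Omega0 clOmega)) (XOmega Xy).
have smono := smonoH DHy DHz; rewrite sqr_enorm in smono.
exact: extragradient_step (lam_gt0 j) eta_gt0 mu_gt0 (lamL j) vi_x vi_y w'_y lip erefl
  (monoF DFy DFz) smono (lexx _).
Qed.

Lemma ineireg_sum (C D2 : R) k z :
  (forall u v, X u -> X v -> dotv (H u) (u - v) <= C) ->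
  (forall u v, X u -> X v -> dotv (u - v) (u - v) <= D2) -> X z ->
  \sum_(j < k) 2 * lam j * p_k lam L eta mu j * (dotv (F z) (y j - z) - eta * C)
    <= (2 * k%:R + 1) * D2.
Proof.
move=> hC hD Xz.
have bet_bnd j := beta_k_bounds (lam_gt0 j) eta_gt0 mu_gt0 (lamL j).
have bnd u v : X u -> X v -> 0 <= dotv (u - v) (u - v) <= D2.
  by move=> Xu Xv; rewrite dotvv_ge0 hD.
apply: (@inertial_telescope _ (beta_k lam L eta mu) alpha _ _ _ _ _ lam
  (fun j => dotv (x j - z) (x j - z)) (fun j => dotv (x j - x j.-1) (x j - x j.-1))
  (fun j => dotv (F z) (y j - z) - eta * C)) => //.
- by move=> j; case/andP: (bet_bnd j).
- by move=> j; case/andP: (bet_bnd j).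
- by move=> j; apply: bnd => //; exact: ineireg_x_in.
- by move=> j; apply: bnd; exact: ineireg_x_in.
move=> j; have := ineireg_step j Xz; rewrite /ine_w dotv_extrapolate.
have lam_eta : 0 <= 2 * lam j * eta by rewrite !mulr_ge0 ?ltW.
have := ler_wpM2l lam_eta (hC z (y j) Xz (ineireg_y_in j)); lra.
Qed.

Lemma ineireg_avg_bound (C D2 eps : R) k z :
  (forall u v, X u -> X v -> dotv (H u) (u - v) <= C) ->
  (forall u v, X u -> X v -> dotv (u - v) (u - v) <= D2) ->
  eta * C <= eps / 2 ->
  (2 * k%:R + 1) * D2 <= eps * \sum_(j < k) lam j * p_k lam L eta mu j -> X z ->
  \sum_(j < k) lam j * eta * p_k lam L eta mu j * dotv (F z) (y j - z)
    <= eps * \sum_(j < k) lam j * eta * p_k lam L eta mu j.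
Proof.
move=> hC hD etaC horizon Xz; have := ineireg_sum k hC hD Xz.
set T := \sum_(j < k) lam j * p_k lam L eta mu j * dotv (F z) (y j - z).
set S := \sum_(j < k) lam j * p_k lam L eta mu j in horizon *.
have -> : \sum_(j < k) 2 * lam j * p_k lam L eta mu j * (dotv (F z) (y j - z) - eta * C)
    = 2 * T - 2 * (eta * C) * S.
  by rewrite /T /S !mulr_sumr -sumrB; apply: eq_bigr => j _; ring.
have -> : \sum_(j < k) lam j * eta * p_k lam L eta mu j * dotv (F z) (y j - z) = eta * T.
  by rewrite /T mulr_sumr; apply: eq_bigr => j _; ring.
have -> : \sum_(j < k) lam j * eta * p_k lam L eta mu j = eta * S.
  by rewrite /S mulr_sumr; apply: eq_bigr => j _; ring.
have S0 : 0 <= S by apply: sumr_ge0 => j _; rewrite mulr_ge0 ?ltW ?p_k_gt0.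
have := ler_wpM2r S0 etaC => bias T_le.
rewrite mulrCA; apply: ler_wpM2l; [exact: ltW | lra].
Qed.

End IneIREG.

Theorem corollary4p19 (R : realType) (n : nat)
  (F H : 'rV[R]_n -> 'rV[R]_n) (DomF DomH X Omega : set 'rV[R]_n)
  (LF LH mu eps D0 lamlo lamhi : R) (alpha lam : nat -> R)
  (x y : nat -> 'rV[R]_n) (k : nat) :
  0 < LF -> 0 < LH ->
  monotone_op DomF F -> lipschitz_op DomF F LF ->
  monotone_op DomH H -> lipschitz_op DomH H LH ->
  0 < mu -> strongly_monotone_op DomH H mu ->
  X !=set0 -> compact X -> convex X ->
  Omega !=set0 -> closed Omega -> convex Omega ->
  X `<=` Omega -> Omega `<=` DomF `&` DomH ->
  solset F X !=set0 ->
  0 < eps -> 0 < D0 -> lamhi * supnorm X H * diamset X / lamlo <= D0 ->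
  let eta := eps / (2 * D0) in
  let L := LF + eta * LH in
  0 < lamlo -> lamlo <= lamhi -> lamhi < 1 / L ->
  (forall j, lamlo <= lam j <= lamhi) ->
  (forall j, 0 <= alpha j) -> alpha 0%N <= 1 ->
  (forall j, alpha j.+1 <= (1 - beta_k lam L eta mu j) * alpha j) ->
  X (x 0%N) ->
  (forall j, y j = orthproj X (ine_w x alpha j -
       lam j *: (F (orthproj Omega (ine_w x alpha j)) + eta *: H (orthproj Omega (ine_w x alpha j))))) ->
  (forall j, x j.+1 = orthproj X (ine_w x alpha j - lam j *: (F (y j) + eta *: H (y j)))) ->
  (1 <= k)%N ->
  (Num.ceil ((1 / (1 - lamhi ^+ 2 * L ^+ 2) + D0 / (lamlo * mu * eps)) *
      ln (2 * k.+1%:R * diamset X ^+ 2 / (lamlo * eps))) <= k%:Z) ->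
  0 <= Gap (ybar_k lam L eta mu y k) F X /\ Gap (ybar_k lam L eta mu y k) F X <= eps.
Proof.
move=> LF0 LH0 monoF lipF _ lipH mu0 smonoH X0 cpX cvxX O0 clO cvxO XO ODom sol0
  eps0 D00 hD0 eta L lo0 lohi hiL hlam alpha0 alpha01 alphaS Xx0 hy hx k0 hceil.
have clX : closed X by apply: compact_closed.
have XDomH : X `<=` DomH by move=> v /XO /ODom [].
have eta0 : 0 < eta by rewrite /eta divr_gt0 ?mulr_gt0.
have L0 : 0 < L by apply: addr_gt0 => //; apply: mulr_gt0.
have lam0 j : 0 < lam j by case/andP: (hlam j) => lo _; exact: lt_le_trans lo.
have hi0 : 0 < 1 - lamhi ^+ 2 * L ^+ 2.
  apply: stepsize_contraction L0 _ hiL; rewrite lexx andbT.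
  exact/ltW/(lt_le_trans lo0 lohi).
have lamL j : 0 < 1 - lam j ^+ 2 * L ^+ 2.
  by apply: stepsize_contraction L0 _ hiL; case/andP: (hlam j) => _ ->; rewrite ltW.
set DX := diamset X in hD0 hceil *; set CH := supnorm X H in hD0 *.
have hC u v : X u -> X v -> dotv (H u) (u - v) <= CH * DX.
  exact: dotv_le_supnorm_diamset cpX XDomH lipH.
have hD2 u v : X u -> X v -> dotv (u - v) (u - v) <= DX ^+ 2.
  exact: dotvv_le_sqr_diamset cpX.
have etaC : eta * (CH * DX) <= eps / 2.
  apply: (@regularization_bias_le _ lamlo lamhi); rewrite ?lo0 ?lohi ?mulrA //.
  apply: mulr_ge0; first exact: le_trans (enorm_ge0 _) (enorm_le_supnorm cpX XDomH lipH Xx0).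
  exact: le_trans (enorm_ge0 _) (enorm_le_diamset cpX Xx0 Xx0).
have horizon : (2 * k%:R + 1) * DX ^+ 2 <= eps * \sum_(j < k) lam j * p_k lam L eta mu j.
  rewrite (_ : D0 / _ = 1 / (2 * lamlo * eta * mu)) in hceil; last first.
    by rewrite /eta; field; rewrite ?gt_eqF.
  exact: p_k_weighted_sum_ge hceil.
apply: (@Gap_weighted_avg _ _ F X (fun j => lam j * eta * p_k lam L eta mu j) y k eps)
  => // [j|j|z Xz].
- by rewrite mulr_gt0 ?(mulr_gt0 (lam0 j)) ?p_k_gt0.
- exact: ineireg_y_in X0 clX hy j.
- exact: (ineireg_avg_bound monoF lipF lipH smonoH X0 clX cvxX O0 clO cvxO XO ODom
    eta0 mu0 (lexx _) lam0 lamL alpha0 alpha01 alphaS Xx0 hy hx hC hD2 etaC horizon Xz).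
Qed.
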